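(* Let $\mathbb{T}$ be a geometric theory over $\Sigma$, let $\{\mathbf{x}\mid\phi\}$ and $\{\mathbf{x},\mathbf{y}\mid\psi\}$ be formulas in context, and let $\mathbf{a}$ be a tuple of pairwise distinct elements of $\mathbb{S}$ of the same length as $\mathbf{y}$. Then the stabilization (with respect to the action $\theta$) of the basic open subset \[[\![\{\mathbf{x},\mathbf{y}\mid\psi\},\mathbf{a}]\!]=\{(\mathbf{M},[\mathbf{b}]):([\mathbf{b}],[\mathbf{a}])\in[\![\mathbf{x},\mathbf{y}\mid\phi\wedge\psi]\!]^{\mathbf{M}}\}\subseteq[\![\mathbf{x}\mid\phi]\!]\] is the definable subset $[\![\mathbf{x}\mid\phi\wedge\exists\mathbf{y}\,\psi]\!]\subseteq[\![\mathbf{x}\mid\phi]\!]$.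
   Context: $\Sigma$ is a single-sorted first-order signature with equality, $\kappa\geq|\Sigma|+\aleph_0$ an infinite cardinal, $\mathbb{S}$ a fixed set of cardinality at least $\kappa$. $M_{\mathbb{T}}$ is the set of $\mathbb{T}$-models whose underlying set is a quotient of a subset of $\mathbb{S}$ (elements written $[a]$), and $I_{\mathbb{T}}$ the set of isomorphisms between them. For a formula in context $\{\mathbf{x}\mid\phi\}$, $[\![\mathbf{x}\mid\phi]\!]=\{(\mathbf{M},[\mathbf{b}]):\mathbf{M}\in M_{\mathbb{T}},[\mathbf{b}]\in\phi^{\mathbf{M}}\}$, with the action $\theta(\mathbf{f}:\mathbf{M}\to\mathbf{N},(\mathbf{M},[\mathbf{b}]))=(\mathbf{N},\mathbf{f}([\mathbf{b}]))$ of $I_{\mathbb{T}}$. A subset is stable if it is closed under this action, and the stabilization of a subset is the least stable subset containing it. *)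

From mathcomp Require Import all_boot.
Set Implicit Arguments. Unset Strict Implicit. Unset Printing Implicit Defensive.

Record signature := Signature {
  funsym : Type; relsym : Type;
  farity : funsym -> nat; rarity : relsym -> nat }.

(** Connectives: =, relations, T, binary /\, arbitrary (set-indexed)
    disjunctions (bottom = empty disjunction), and existential
    quantification over a tuple of fresh variables appended to the context. *)
Inductive term (Σ : signature) (n : nat) : Type :=
| tvar : 'I_n -> term Σ n
| tapp : forall f : funsym Σ, ('I_(farity f) -> term Σ n) -> term Σ n.

Inductive formula (Σ : signature) : nat -> Type :=
| fEq : forall n, term Σ n -> term Σ n -> formula Σ n
| fRel : forall n (r : relsym Σ), ('I_(rarity r) -> term Σ n) -> formula Σ n
| fTop : forall n, formula Σ n
| fAnd : forall n, formula Σ n -> formula Σ n -> formula Σ n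
| fDisj : forall n (I : Type), (I -> formula Σ n) -> formula Σ n
| fEx : forall n k, formula Σ (n + k) -> formula Σ n.

Arguments tvar {Σ n} i.
Arguments tapp {Σ n} f args.
Arguments fEq {Σ n} t u.
Arguments fRel {Σ n} r args.
Arguments fTop {Σ} n.
Arguments fAnd {Σ n} φ ψ.
Arguments fDisj {Σ n I} fs.
Arguments fEx {Σ n k} ψ.

Definition lift_ren n p k (ρ : 'I_n -> 'I_p) : 'I_(n + k) -> 'I_(p + k) :=
  fun i => match split i with inl j => lshift k (ρ j) | inr j => rshift p j end.

Fixpoint trename Σ n p (ρ : 'I_n -> 'I_p) (t : term Σ n) : term Σ p :=
  match t with
  | tvar i => tvar (ρ i)
  | tapp f args => tapp f (fun i => trename ρ (args i))
  end.

Fixpoint frename Σ n (φ : formula Σ n) {struct φ} :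
    forall p, ('I_n -> 'I_p) -> formula Σ p :=
  match φ in formula _ n return forall p, ('I_n -> 'I_p) -> formula Σ p with
  | @fEq _ n t u => fun p ρ => fEq (trename ρ t) (trename ρ u)
  | @fRel _ n r args => fun p ρ => fRel r (fun i => trename ρ (args i))
  | @fTop _ n => fun p ρ => fTop p
  | @fAnd _ n φ1 φ2 => fun p ρ => fAnd (frename φ1 ρ) (frename φ2 ρ)
  | @fDisj _ n J fs => fun p ρ => fDisj (fun i => frename (fs i) ρ)
  | @fEx _ n k ψ => fun p ρ => fEx (frename ψ (@lift_ren _ _ k ρ))
  end.

Definition wk Σ n m (φ : formula Σ n) : formula Σ (n + m) :=
  frename φ (fun i => lshift m i).
Arguments wk {Σ n} m φ.

Record sequent (Σ : signature) := Sequent {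
  sctx : nat; shyp : formula Σ sctx; sconc : formula Σ sctx }.
Definition theory (Σ : signature) := sequent Σ -> Prop.

(** Σ-structures whose underlying set is a quotient of a subset of S:
    the underlying set is a set [car] of blocks (equivalence classes),
    i.e. nonempty pairwise disjoint subsets of S; the class of a ∈ S is
    the block containing a, written [a]. *)
Record structure (Σ : signature) (S : Type) := Structure {
  car : (S -> Prop) -> Prop;
  car_inhab : forall C, car C -> exists s, C s;
  car_disj : forall C D s, car C -> car D -> C s -> D s -> C = D;
  fint : forall f : funsym Σ, ('I_(farity f) -> {C | car C}) -> {C | car C};
  rint : forall r : relsym Σ, ('I_(rarity r) -> {C | car C}) -> Prop }.

Arguments car {Σ S} s _ : rename.
Arguments fint {Σ S} s f _ : rename.
Arguments rint {Σ S} s r _ : rename.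

Definition carrier Σ S (M : structure Σ S) := {C | car M C}.

Definition concat (X : Type) n k (e : 'I_n -> X) (d : 'I_k -> X) : 'I_(n + k) -> X :=
  fun i => match split i with inl j => e j | inr j => d j end.

Fixpoint teval Σ S (M : structure Σ S) n (e : 'I_n -> carrier M) (t : term Σ n)
    : carrier M :=
  match t with
  | tvar i => e i
  | tapp f args => fint M f (fun i => teval e (args i))
  end.

Fixpoint sat Σ S (M : structure Σ S) n (φ : formula Σ n) {struct φ} :
    ('I_n -> carrier M) -> Prop :=
  match φ in formula _ n return ('I_n -> carrier M) -> Prop with
  | @fEq _ _ t u => fun e => teval e t = teval e u
  | @fRel _ _ r args => fun e => rint M r (fun i => teval e (args i))
  | @fTop _ _ => fun _ => True
  | @fAnd _ _ a b => fun e => sat a e /\ sat b e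
  | @fDisj _ _ J fs => fun e => exists i, sat (fs i) e
  | @fEx _ _ k ψ => fun e => exists d : 'I_k -> carrier M, sat ψ (concat e d)
  end.

Definition is_model Σ S (T : theory Σ) (M : structure Σ S) : Prop :=
  forall s, T s -> forall e : 'I_(sctx s) -> carrier M, sat (shyp s) e -> sat (sconc s) e.

Definition is_iso Σ S (M N : structure Σ S) (f : carrier M -> carrier N) : Prop :=
  bijective f /\
  (forall g args, f (fint M g args) = fint N g (f \o args)) /\
  (forall r args, rint M r args <-> rint N r (f \o args)).

Definition point Σ S n := {M : structure Σ S & 'I_n -> carrier M}.

Definition definable Σ S (T : theory Σ) n (φ : formula Σ n) : point Σ S n -> Prop :=
  fun p => is_model T (projT1 p) /\ sat φ (projT2 p).

Definition stable Σ S (T : theory Σ) n (X : point Σ S n -> Prop) : Prop :=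
  forall (M N : structure Σ S) (f : carrier M -> carrier N) (b : 'I_n -> carrier M),
    is_model T M -> is_model T N -> is_iso f ->
    X (existT _ M b) -> X (existT _ N (f \o b)).

Definition stabilization Σ S (T : theory Σ) n (A X : point Σ S n -> Prop)
    : point Σ S n -> Prop :=
  fun p => forall V : point Σ S n -> Prop, stable T V ->
    (forall q, X q -> V q) -> (forall q, V q -> A q) -> V p.

(** Basic open [[{x,y | ψ}, a]] =
    {(M,[b]) : ([b],[a]) ∈ [[x,y | φ ∧ ψ]]^M}; [a_i] is the block of M
    containing a_i (so in particular each a_i lies in the underlying subset). *)
Definition basic_open Σ S (T : theory Σ) n m (φ : formula Σ n)
    (ψ : formula Σ (n + m)) (a : 'I_m -> S) : point Σ S n -> Prop :=
  fun p => is_model T (projT1 p) /\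
    exists c : 'I_m -> carrier (projT1 p),
      (forall i, sval (c i) (a i)) /\
      sat (fAnd (wk m φ) ψ) (concat (projT2 p) c).

From mathcomp Require Import all_boot.
From mathcomp Require Import zify.
From Stdlib Require Import FunctionalExtensionality ProofIrrelevance ClassicalEpsilon.
Set Implicit Arguments. Unset Strict Implicit. Unset Printing Implicit Defensive.

(* The definable set [[x | φ ∧ ∃y ψ]] is stable, contains the basic open set and
   lies in [[x | φ]], so it contains the stabilization.  Conversely, let M ⊨ φ(b)
   and M ⊨ ψ(b, d).  Since S contains an infinite sequence, there is an injection
   τ : S -> S missing every a_i; relabelling each block C of M as
   τ(C) ∪ {a_i | d_i = C} gives an isomorphic copy N of M in which [a_i] is the
   image of d_i, so the image of (M, b) lies in the basic open set and (M, b)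
   lies in its stabilization. *)

Lemma concat_comp (X Y : Type) (f : X -> Y) n k (e : 'I_n -> X) (d : 'I_k -> X) :
  f \o concat e d = concat (f \o e) (f \o d).
Proof.
by apply: functional_extensionality => i; rewrite /concat /=; case: split.
Qed.

Lemma teval_iso Σ S (M N : structure Σ S) (f : carrier M -> carrier N) n
    (e : 'I_n -> carrier M) (t : term Σ n) :
  (forall g args, f (fint M g args) = fint N g (f \o args)) ->
  f (teval e t) = teval (f \o e) t.
Proof.
move=> fM; elim: t => [i|g args IH] //=.
by rewrite fM; congr (fint N g); apply: functional_extensionality.
Qed.

Lemma sat_iso Σ S (M N : structure Σ S) (f : carrier M -> carrier N) :
  is_iso f -> forall n (φ : formula Σ n) e, sat φ e -> sat φ (f \o e).
Proof.
case=> _ [fM fR] n φ; elim: φ => {n} /=.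
- by move=> n t u e; rewrite -!teval_iso // => ->.
- move=> n r args e /fR.
  suff -> : f \o (fun i => teval e (args i)) = (fun i => teval (f \o e) (args i)) by [].
  by apply: functional_extensionality => i /=; apply: teval_iso.
- by [].
- by move=> n φ1 IH1 φ2 IH2 e [/IH1 ? /IH2 ?].
- by move=> n I fs IH e [i /IH ?]; exists i.
- by move=> n k ψ IH e [d /IH]; rewrite concat_comp => ?; exists (f \o d).
Qed.

Lemma iso_inv Σ S (M N : structure Σ S) (f : carrier M -> carrier N) g :
  is_iso f -> cancel f g -> cancel g f -> is_iso g.
Proof.
case=> _ [fM fR] fK gK; split; first exact: Bijective gK fK.
have fgK X (h : X -> carrier N) : f \o (g \o h) = h.
  by apply: functional_extensionality => i /=; rewrite gK.
split=> [h args|r args]; last by rewrite fR fgK.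
by apply: (can_inj fK); rewrite gK fM fgK.
Qed.

Lemma is_model_iso Σ S (T : theory Σ) (M N : structure Σ S) (f : carrier M -> carrier N) :
  is_iso f -> is_model T M -> is_model T N.
Proof.
move=> fiso MT; have [[g fK gK] _] := fiso.
have giso := iso_inv fiso fK gK.
move=> s Ts e /(sat_iso giso) /(MT s Ts) /(sat_iso fiso).
suff -> : f \o (g \o e) = e by [].
by apply: functional_extensionality => i /=; rewrite gK.
Qed.

Lemma teval_rename Σ S (M : structure Σ S) n p (ρ : 'I_n -> 'I_p)
    (e : 'I_p -> carrier M) (t : term Σ n) :
  teval e (trename ρ t) = teval (e \o ρ) t.
Proof.
elim: t => [i|g args IH] //=.
by congr (fint M g); apply: functional_extensionality.
Qed.

Lemma concat_lift_ren (X : Type) n p k (ρ : 'I_n -> 'I_p) (e : 'I_p -> X) (d : 'I_k -> X) :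
  concat e d \o @lift_ren _ _ k ρ = concat (e \o ρ) d.
Proof.
apply: functional_extensionality => i; rewrite /concat /lift_ren /=.
by case: (split i) => j; rewrite (unsplitK (inl _)) + rewrite (unsplitK (inr _)).
Qed.

Lemma sat_rename Σ S (M : structure Σ S) n (φ : formula Σ n) :
  forall p (ρ : 'I_n -> 'I_p) (e : 'I_p -> carrier M),
    sat (frename φ ρ) e <-> sat φ (e \o ρ).
Proof.
elim: φ => {n} /=.
- by move=> n t u p ρ e; rewrite !teval_rename.
- move=> n r args p ρ e.
  suff -> : (fun i => teval e (trename ρ (args i))) = (fun i => teval (e \o ρ) (args i))
    by [].
  by apply: functional_extensionality => i; apply: teval_rename.
- by [].
- by move=> n φ1 IH1 φ2 IH2 p ρ e; rewrite IH1 IH2.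
- by move=> n I fs IH p ρ e; split=> -[i /IH ?]; exists i.
- move=> n k ψ IH p ρ e; split=> -[d Hd]; exists d.
  + by move/IH: Hd; rewrite concat_lift_ren.
  + by apply/IH; rewrite concat_lift_ren.
Qed.

Lemma sat_wk Σ S (M : structure Σ S) n m (φ : formula Σ n)
    (e : 'I_n -> carrier M) (d : 'I_m -> carrier M) :
  sat (wk m φ) (concat e d) <-> sat φ e.
Proof.
rewrite /wk sat_rename; suff -> : concat e d \o (fun i => lshift m i) = e by [].
apply: functional_extensionality => i; rewrite /concat /=.
by rewrite (unsplitK (inl _)).
Qed.

Lemma definable_stable Σ S (T : theory Σ) n (φ : formula Σ n) :
  stable (S := S) T (definable T φ).
Proof. by move=> M N f b _ NT fiso [_ Mφ]; split=> //; apply: sat_iso. Qed.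

Lemma basic_open_sub_definable Σ S (T : theory Σ) n m (φ : formula Σ n)
    (ψ : formula Σ (n + m)) (a : 'I_m -> S) (p : point Σ S n) :
  basic_open T φ ψ a p -> definable T (fAnd φ (fEx ψ)) p.
Proof.
by case: p => M b [MT [c [_ [/sat_wk Mφ Mψ]]]]; split=> //; split=> //; exists c.
Qed.

Lemma stabilization_of_iso Σ S (T : theory Σ) n (A X : point Σ S n -> Prop)
    (M N : structure Σ S) (f : carrier M -> carrier N) (b : 'I_n -> carrier M) :
  is_model T M -> is_model T N -> is_iso f ->
  X (existT _ N (f \o b)) -> stabilization T A X (existT _ M b).
Proof.
move=> MT NT fiso Xfb V stV XV _; have [[g fK gK] _] := fiso.
have := stV N M g (f \o b) NT MT (iso_inv fiso fK gK) (XV _ Xfb).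
suff -> : g \o (f \o b) = b by [].
by apply: functional_extensionality => i /=; rewrite fK.
Qed.

Section Transport.

Variables (Σ : signature) (S : Type) (M : structure Σ S) (Q : carrier M -> S -> Prop).
Hypothesis Q_inhab : forall x, exists s, Q x s.
Hypothesis Q_disj : forall x y s, Q x s -> Q y s -> x = y.

Definition transport_car (D : S -> Prop) : Prop := exists x, D = Q x.

Lemma transport_car_inhab D : transport_car D -> exists s, D s.
Proof. by case=> x ->. Qed.

Lemma transport_car_disj C D s :
  transport_car C -> transport_car D -> C s -> D s -> C = D.
Proof. by case=> x -> [y ->] Cs Ds; rewrite (Q_disj Cs Ds). Qed.

Definition transport_to (x : carrier M) : {D | transport_car D} :=
  exist _ (Q x) (ex_intro _ x erefl).

Definition transport_from (y : {D | transport_car D}) : carrier M :=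
  proj1_sig (constructive_indefinite_description _ (proj2_sig y)).

Lemma transport_toK : cancel transport_to transport_from.
Proof.
move=> x; rewrite /transport_from /=.
case: constructive_indefinite_description => y /= Qxy.
have [s Qxs] := Q_inhab x.
by apply: (Q_disj (s := s)) => //; rewrite -Qxy.
Qed.

Lemma transport_fromK : cancel transport_from transport_to.
Proof.
case=> D HD; rewrite /transport_from /transport_to /=.
case: constructive_indefinite_description => x /= DQ; subst D.
by congr exist; apply: proof_irrelevance.
Qed.

Definition transport : structure Σ S := {|
  car := transport_car;
  car_inhab := transport_car_inhab;
  car_disj := transport_car_disj;
  fint := fun g args => transport_to (fint M g (transport_from \o args));
  rint := fun r args => rint M r (transport_from \o args) |}.

Lemma transport_iso : @is_iso Σ S M transport transport_to.
Proof.
have fromK X (h : X -> carrier M) : transport_from \o (transport_to \o h) = h.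
  by apply: functional_extensionality => i /=; rewrite transport_toK.
split; first exact: Bijective transport_toK transport_fromK.
by split=> [g args|r args] /=; rewrite fromK.
Qed.

End Transport.

Definition pick_preim (X Y : Type) (f : X -> Y) (y : Y) : option X :=
  match excluded_middle_informative (exists x, y = f x) with
  | left H => Some (proj1_sig (constructive_indefinite_description _ H))
  | right _ => None
  end.

Lemma pick_preimS X Y (f : X -> Y) y x : pick_preim f y = Some x -> y = f x.
Proof.
rewrite /pick_preim; case: excluded_middle_informative => [H [<-]|//].
exact: proj2_sig (constructive_indefinite_description _ H).
Qed.

Lemma pick_preimN X Y (f : X -> Y) y x : pick_preim f y = None -> y <> f x.
Proof.
by rewrite /pick_preim; case: excluded_middle_informative => // H _ yfx; apply: H; exists x.
Qed.

Lemma injective_seq_avoids_tuple (S : Type) (u : nat -> S) m (a : 'I_m -> S) :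
  injective u -> exists N0, forall k i, N0 <= k -> u k <> a i.
Proof.
move=> u_inj; pose idx i := if pick_preim u (a i) is Some k then k.+1 else 0.
exists (\max_(i < m) idx i) => k i le_k uk_ai.
have := leq_bigmax (F := idx) i; rewrite /idx.
case Hk: (pick_preim u (a i)) => [k'|]; last by move=> _; apply: (pick_preimN Hk) (esym uk_ai).
move: (pick_preimS Hk); rewrite -uk_ai => /u_inj <- lt_k.
by have := leq_trans lt_k le_k; rewrite ltnn.
Qed.

(* Hilbert's hotel along the tail u N0, u (N0 + 1), ... of u, which misses every
   a_i: the points u k go to the even places, the a_i outside the range of u to
   the odd places, everything else is fixed. *)
Lemma injection_avoiding_tuple (S : Type) (u : nat -> S) m (a : 'I_m -> S) :
  injective u -> exists τ : S -> S, injective τ /\ forall s i, τ s <> a i.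
Proof.
move=> u_inj; have [N0 uN0] := injective_seq_avoids_tuple a u_inj.
pose τ s := if pick_preim u s is Some k then u (N0 + 2 * k)
  else if pick_preim a s is Some i then u (N0 + (2 * i + 1)) else s.
exists τ; split.
- move=> s s'; rewrite /τ.
  case Hk: (pick_preim u s) => [k|]; case Hk': (pick_preim u s') => [k'|].
  + by rewrite (pick_preimS Hk) (pick_preimS Hk') => /u_inj eq_k; congr u; lia.
  + case: (pick_preim a s') => [i'|]; first by move/u_inj; lia.
    by move=> e; have := pick_preimN (x := N0 + 2 * k) Hk'; rewrite -e.
  + case: (pick_preim a s) => [i|]; first by move/u_inj; lia.
    by move=> e; have := pick_preimN (x := N0 + 2 * k') Hk; rewrite e.
  case Hi: (pick_preim a s) => [i|]; case Hi': (pick_preim a s') => [i'|] //.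
  + rewrite (pick_preimS Hi) (pick_preimS Hi') => /u_inj eq_i.
    by congr a; apply: val_inj => /=; lia.
  + by move=> e; have := pick_preimN (x := N0 + (2 * i + 1)) Hk'; rewrite -e.
  + by move=> e; have := pick_preimN (x := N0 + (2 * i' + 1)) Hk; rewrite e.
- move=> s i; rewrite /τ.
  case: (pick_preim u s) => [k|]; first by apply: uN0; lia.
  case Hj: (pick_preim a s) => [j|]; first by apply: uN0; lia.
  exact: pick_preimN Hj.
Qed.

Lemma relabel_blocks Σ S (M : structure Σ S) m (a : 'I_m -> S) (d : 'I_m -> carrier M)
    (τ : S -> S) :
  injective a -> injective τ -> (forall s i, τ s <> a i) ->
  exists (N : structure Σ S) (f : carrier M -> carrier N),
    is_iso f /\ forall i, sval (f (d i)) (a i).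
Proof.
move=> a_inj τ_inj τa.
pose Q (x : carrier M) s := (exists2 t, sval x t & s = τ t) \/ (exists2 i, s = a i & d i = x).
have Q_inhab x : exists s, Q x s.
  by have [t xt] := car_inhab (proj2_sig x); exists (τ t); left; exists t.
have Q_disj x y s : Q x s -> Q y s -> x = y.
  case=> [[t xt ->]|[i -> <-]] [[t' yt' e]|[j e <-]].
  - move: e yt' => /τ_inj <- yt; apply: eq_sig_hprop => [? ? ?|].
      exact: proof_irrelevance.
    exact: car_disj (proj2_sig x) (proj2_sig y) xt yt.
  - by case: (τa t j).
  - by case: (τa t' i); rewrite -e.
  - by rewrite (a_inj _ _ e).
exists (transport Q_inhab Q_disj), (transport_to Q); split.
- exact: transport_iso.
- by move=> i; right; exists i.
Qed.

Theorem lemma3p11 (Σ : signature) (S : Type)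
  (* an infinite cardinal κ ≥ |Σ| + ℵ0 (represented by a type K) with |S| ≥ κ *)
  (K : Type) (iκ : (funsym Σ + relsym Σ) + nat -> K) (iS : K -> S)
  (Hiκ : injective iκ) (HiS : injective iS)
  (T : theory Σ) (n m : nat) (φ : formula Σ n) (ψ : formula Σ (n + m))
  (a : 'I_m -> S) (Ha : injective a) :
  forall p : point Σ S n,
    stabilization T (definable T φ) (basic_open T φ ψ a) p <->
    definable T (fAnd φ (fEx ψ)) p.
Proof.
move=> [M b]; split.
- apply; first exact: definable_stable.
  + exact: basic_open_sub_definable.
  + by move=> q [? []].
- case=> MT [Mφ [d Mψ]].
  have u_inj : injective (fun k => iS (iκ (inr k))) by move=> k k' /HiS /Hiκ [].
  have [τ [τ_inj τa]] := injection_avoiding_tuple a u_inj.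
  have [N [f [fiso fda]]] := relabel_blocks d Ha τ_inj τa.
  have NT := is_model_iso fiso MT.
  apply: (stabilization_of_iso MT NT fiso); split=> //; exists (f \o d); split=> //.
  by rewrite -concat_comp; apply: (sat_iso fiso); split=> //; apply/sat_wk.
Qed.
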